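(* Let $f:X\to Y$ be a continuous map between arbitrary topological spaces. Then $f$ is locally closed if and only if $f^{-1}:\mathcal P Y\to\mathcal P X$ is a D-morphism of MT-algebras.
   Context: For a space $X$, $\mathcal P X$ is the MT-algebra consisting of the powerset of $X$ with $\square$ the topological interior operator. An MT-morphism between MT-algebras is a complete boolean homomorphism $h$ with $h(\square a)\le\square h(a)$ for all $a$; such $h:M\to N$ has a left adjoint $h^*:N\to M$, $h^*(b)=\bigwedge\{a\in M: b\le h(a)\}$. An element $a$ of an MT-algebra is locally closed if $a=\square b\wedge\Diamond c$ for some $b,c$, where $\Diamond=\neg\square\neg$. An MT-morphism $h$ is a D-morphism if $h^*$ maps locally closed atoms to locally closed atoms. A point $x\in X$ is locally closed if $\{x\}$ is closed in some open neighborhood of $x$; a continuous map is locally closed if it maps locally closed points to locally closed points. *)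

From mathcomp Require Import all_boot all_order.
From mathcomp Require Import all_classical topology.
Set Implicit Arguments. Unset Strict Implicit. Unset Printing Implicit Defensive.
Local Open Scope classical_set_scope.

(* The MT-algebra P X of a space X: powerset of X, box = interior,
   diamond = ~ box ~. *)
Definition mt_box (X : topologicalType) (a : set X) : set X := interior a.
Definition mt_dia (X : topologicalType) (a : set X) : set X :=
  ~` interior (~` a).

Definition is_atom (X : Type) (a : set X) : Prop :=
  a <> set0 /\ forall b, b `<=` a -> b = set0 \/ b = a.

Definition lc_elem (X : topologicalType) (a : set X) : Prop :=
  exists b c : set X, a = mt_box b `&` mt_dia c.

Definition MT_morphism (X Y : topologicalType) (h : set Y -> set X) : Prop :=
  [/\ forall a, h (~` a) = ~` h a,
      forall S : set (set Y), h (\bigcup_(a in S) a) = \bigcup_(b in h @` S) b,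
      forall S : set (set Y), h (\bigcap_(a in S) a) = \bigcap_(b in h @` S) b
    & forall a, h (mt_box a) `<=` mt_box (h a)].

Definition left_adj (X Y : Type) (h : set Y -> set X) (b : set X) : set Y :=
  \bigcap_(a in [set a | b `<=` h a]) a.

Definition D_morphism (X Y : topologicalType) (h : set Y -> set X) : Prop :=
  MT_morphism h /\
  forall b : set X, is_atom b -> lc_elem b ->
    is_atom (left_adj h b) /\ lc_elem (left_adj h b).

(* x is locally closed: {x} is closed in some open neighbourhood U of x,
   i.e. (subspace topology) {x} = C `&` U for some closed C. *)
Definition lc_point (X : topologicalType) (x : X) : Prop :=
  exists U : set X, [/\ open U, U x &
    exists C : set X, closed C /\ C `&` U = [set x]].

Definition lc_map (X Y : topologicalType) (f : X -> Y) : Prop :=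
  forall x, lc_point x -> lc_point (f x).

From mathcomp Require Import all_boot all_order.
From mathcomp Require Import all_classical topology.
Local Open Scope classical_set_scope.

(* The atoms of P X are the singletons, and {x} is locally closed in P X exactly
   when x is a locally closed point.  Preimage under a continuous f is always an
   MT-morphism, and its left adjoint sends {x} to {f x}; so the D-morphism condition
   says precisely that f maps locally closed points to locally closed points. *)

Lemma is_atomP (T : Type) (a : set T) : is_atom a <-> exists x, a = [set x].
Proof.
split=> [[a_neq0 a_min] | [x ->]].
- have [x ax] : exists x, a x by apply/set0P/eqP.
  exists x; have /a_min[x_eq0 | //] : [set x] `<=` a by move=> y ->.
  by move/seteqP: x_eq0 => -[/(_ x erefl)].
- split=> [/seteqP[/(_ x erefl)] // | b bx].
  have [bxx | nbx] := pselect (b x).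
    by right; apply/seteqP; split=> // y ->.
  by left; apply/seteqP; split=> // y by_; move: (by_); rewrite (bx _ by_).
Qed.

Lemma lc_elem_set1 (X : topologicalType) (x : X) : lc_elem [set x] <-> lc_point x.
Proof.
split=> [[b [c x_eq]] | [U [oU Ux [C [cC CU]]]]].
- have [bx _] : (mt_box b `&` mt_dia c) x by rewrite -x_eq.
  exists (mt_box b); split=> //; first exact: open_interior.
  exists (mt_dia c); split; last by rewrite setIC.
  exact/open_closedC/open_interior.
- exists U, C; rewrite /mt_box /mt_dia interiorC setCK.
  by rewrite (interior_id U).1 // -(closure_id C).1 // setIC.
Qed.

Lemma left_adj_preimage_set1 (T U : Type) (f : T -> U) (x : T) :
  left_adj (preimage f) [set x] = [set f x].
Proof.
apply/seteqP; split=> [y | y -> a]; last exact.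
by apply; move=> z ->.
Qed.

Lemma preimage_MT_morphism (X Y : topologicalType) (f : X -> Y) :
  continuous f -> MT_morphism (preimage f).
Proof.
move=> cf; split=> [a | S | S | a x].
- exact: preimage_setC.
- by rewrite bigcup_image preimage_bigcup.
- by rewrite bigcap_image preimage_bigcap.
- exact: cf.
Qed.

Theorem lemma5p12 (X Y : topologicalType) (f : X -> Y) :
  continuous f ->
  (lc_map f <-> D_morphism (fun B : set Y => f @^-1` B)).
Proof.
move=> cf; split=> [lcf | [_ D] x /lc_elem_set1 lcx].
- split; first exact: preimage_MT_morphism.
  move=> _ /is_atomP[x ->] /lc_elem_set1 lcx.
  rewrite left_adj_preimage_set1 is_atomP lc_elem_set1.
  split; first by exists (f x).
  exact: lcf.
- have x_atom : is_atom [set x] by apply/is_atomP; exists x.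
  have [_] := D _ x_atom lcx.
  by rewrite left_adj_preimage_set1 lc_elem_set1.
Qed.
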